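(* Let $G=\square_{i=1}^t G^{(i)}$ be a product graph of dimension $t$ and let $M\subseteq V(G)$ with $|M|=m\le t$. Then there exist pairwise (vertex-)disjoint projections $H_1,\dots,H_m$ of $G$, each of dimension at least $t-m+1$, such that every $v\in M$ lies in exactly one of $H_1,\dots,H_m$ (and each $H_j$ contains exactly one vertex of $M$). *)

From mathcomp Require Import all_boot.
Set Implicit Arguments. Unset Strict Implicit. Unset Printing Implicit Defensive.

(* A product graph G = G^(1) [] ... [] G^(t): factor i has vertex set V i
   (a finite type) and edge relation E i.  Vertices of G are tuples. *)
Definition pvert (t : nat) (V : 'I_t -> finType) := {dffun forall i : 'I_t, V i}.

Definition padj (t : nat) (V : 'I_t -> finType) (E : forall i, rel (V i))
  (u v : pvert V) : bool :=
  [exists i, E i (u i) (v i) && [forall j, (j != i) ==> (u j == v j)]].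

(* A projection of G: a set S of free coordinates and a base vertex a; its
   vertex set consists of the vertices agreeing with a outside S (it induces
   the subgraph isomorphic to the product of the G^(i), i in S). *)
Definition projection (t : nat) (V : 'I_t -> finType) : Type :=
  ({set 'I_t} * pvert V)%type.

Definition proj_dim (t : nat) (V : 'I_t -> finType) (H : projection V) : nat :=
  #|H.1|.

Definition proj_vset (t : nat) (V : 'I_t -> finType) (H : projection V)
  : {set pvert V} :=
  [set v : pvert V | [forall i, (i \notin H.1) ==> (v i == H.2 i)]].

From mathcomp Require Import all_boot.
From mathcomp Require Import zify.

Set Implicit Arguments.
Unset Strict Implicit.
Unset Printing Implicit Defensive.

(* Every vertex v of M becomes the base point of a projection whose free
   coordinates S v avoid, for each other u in M, some coordinate where u and v
   differ; such projections are disjoint.  The free sets are built by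
   induction on the number of available coordinates F: if some i in F takes
   two values on M, split M by the value of the i-th coordinate, recurse on
   each (strictly smaller) class with F minus i, and use i to separate
   different classes.  Otherwise all of M agrees on F, so distinct vertices
   of M differ outside F and may all take S v = F.  Each split loses one
   coordinate but also at least one vertex, whence the dimension
   #|F| - #|M| + 1. *)

Lemma card_fiber_lt (T : finType) (U : eqType) (f : T -> U) (M : {set T}) u w x :
  u \in M -> w \in M -> f u != f w -> #|[set v in M | f v == x]| < #|M|.
Proof.
move=> uM wM fuw; apply/proper_card/properP.
split; first by apply/subsetP => v /setIdP[].
have [ux | ux] := eqVneq (f u) x; last by exists u; rewrite // inE (negPf ux) andbF.
by exists w; rewrite // inE -ux eq_sym (negPf fuw) andbF.
Qed.

Section FamilyOfDisjointSets.
Variables (T : finType) (M : {set T}) (A : T -> {set T}).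
Hypothesis mem_A : forall v, v \in M -> v \in A v.
Hypothesis disjoint_A :
  {in M &, forall u w, u != w -> [disjoint A u & A w]}.

Lemma disjoint_family_setIM v : v \in M -> A v :&: M = [set v].
Proof.
move=> vM; apply/setP => z; rewrite !inE.
apply/andP/eqP => [[zAv zM] | ->]; last by rewrite mem_A.
apply/eqP; apply: contraT => zv.
by have := disjointFl (disjoint_A zM vM zv) zAv; rewrite mem_A.
Qed.

End FamilyOfDisjointSets.

Section Projections.
Variables (t : nat) (V : 'I_t -> finType).

Lemma proj_vset_base (P : projection V) : P.2 \in proj_vset P.
Proof. by rewrite inE; apply/forallP => i; apply/implyP. Qed.

Lemma proj_vset_disjoint (P Q : projection V) i :
  i \notin P.1 -> i \notin Q.1 -> P.2 i != Q.2 i ->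
  [disjoint proj_vset P & proj_vset Q].
Proof.
move=> iP iQ; apply: contraNT; rewrite -setI_eq0 => /set0Pn[z].
rewrite !inE => /andP[/forallP/(_ i) zP /forallP/(_ i) zQ].
by rewrite -(eqP (implyP zP iP)) -(eqP (implyP zQ iQ)).
Qed.

Lemma pvert_neq_outside (F : {set 'I_t}) (u w : pvert V) :
  u != w -> {in F, forall i, u i = w i} -> exists2 i, i \notin F & u i != w i.
Proof.
move=> uw eqF; apply/exists_inP; apply: contraNT uw => /exists_inPn equw.
by apply/eqP/ffunP => i; case: (boolP (i \in F)) => [/eqF | /equw /negPn/eqP].
Qed.

Definition coord_separated (S : pvert V -> {set 'I_t}) (u w : pvert V) :=
  [exists i, [&& i \notin S u, i \notin S w & u i != w i]].

Lemma coord_separated_disjoint S u w :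
  coord_separated S u w -> [disjoint proj_vset (S u, u) & proj_vset (S w, w)].
Proof. by case/existsP => i /and3P[]; apply: (@proj_vset_disjoint (_, _) (_, _)). Qed.

Lemma separating_free_sets (F : {set 'I_t}) (M : {set pvert V}) :
  #|M| <= #|F| ->
  exists S : pvert V -> {set 'I_t},
    (forall v, v \in M -> S v \subset F /\ #|F| - #|M| + 1 <= #|S v|) /\
    {in M &, forall u w, u != w -> coord_separated S u w}.
Proof.
have [n] := ubnP #|F|; elim: n F M => // n IH F M /ltnSE leFn leMF.
case: (pickP [pred i | (i \in F) && [exists u in M, exists w in M, u i != w i]])
  => [i /andP[iF /exists_inP[u0 u0M /exists_inP[w0 w0M u0w0]]] | constF].
  pose fiber x := [set v in M | v i == x].
  have ltFiM x : #|fiber x| < #|M| by apply: card_fiber_lt u0M w0M u0w0.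
  have cardFi : #|F| = #|F :\ i|.+1 by rewrite (cardsD1 i) iF.
  have ltFin : #|F :\ i| < n by lia.
  have leFiFi x : #|fiber x| <= #|F :\ i| by have := ltFiM x; lia.
  have [Sx SxP] := fin_all_exists (fun x => IH _ _ ltFin (leFiFi x)).
  exists (fun v : pvert V => Sx (v i) v); split.
    move=> v vM; have /(SxP (v i)).1[subS dimS] : v \in fiber (v i).
      by rewrite inE vM eqxx.
    split; first exact: subset_trans subS (subsetDl _ _).
    move: (ltFiM (v i)) dimS leMF; rewrite cardFi.
    move: #|fiber _| #|M| #|F :\ i| #|Sx _ _| => f m a s; lia.
  move=> u w uM wM uw; have [e | ne] := eqVneq (u i) (w i).
    have sep := (SxP (u i)).2 u w; rewrite /coord_separated /= -e in sep *.
    by apply: sep; rewrite // inE ?uM ?wM ?e eqxx.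
  have notin v : v \in M -> i \notin Sx (v i) v.
    move=> vM; have /(SxP (v i)).1[/subsetP subS _] : v \in fiber (v i).
      by rewrite inE vM eqxx.
    by apply: contraTN isT => /subS; rewrite !inE eqxx.
  by apply/existsP; exists i; rewrite !notin.
exists (fun=> F); split.
  move=> v vM; split => //; have : 0 < #|M| by apply/card_gt0P; exists v.
  by lia.
move=> u w uM wM uw; apply/existsP.
have [|i iF uwi] := pvert_neq_outside (F := F) uw.
  move=> i iF; apply/eqP; have /negbT := constF i; rewrite /= iF.
  by move=> /exists_inPn/(_ u uM)/exists_inPn/(_ w wM)/negPn.
by exists i; rewrite iF uwi.
Qed.

End Projections.

Theorem mainTheorem3 (t : nat) (V : 'I_t -> finType)
  (E : forall i : 'I_t, rel (V i)) (M : {set pvert V}) :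
  #|M| <= t ->
  exists H : 'I_#|M| -> projection V,
    (forall j, t - #|M| + 1 <= proj_dim (H j)) /\
    (forall j k, j != k -> [disjoint proj_vset (H j) & proj_vset (H k)]) /\
    (forall v, v \in M -> exists! j, v \in proj_vset (H j)) /\
    (forall j, #|proj_vset (H j) :&: M| = 1).
Proof.
rewrite -[t in _ <= t]card_ord -cardsT => leMt.
have [S [dimS sepS]] := separating_free_sets leMt.
pose P v := proj_vset (S v, v).
have setIM v : v \in M -> P v :&: M = [set v].
  apply: disjoint_family_setIM => [w _ | u w uM wM uw]; first exact: proj_vset_base.
  exact/coord_separated_disjoint/sepS.
exists (fun j => (S (enum_val j), enum_val j)); split; last split; last split.
- by move=> j; have [_] := dimS _ (enum_valP j); rewrite cardsT card_ord.
- move=> j k jk; apply/coord_separated_disjoint/sepS; rewrite ?enum_valP //.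
  by apply: contra jk => /eqP/enum_val_inj ->.
- move=> v vM; exists (enum_rank_in vM v).
  split=> [|k vk] /=; first by rewrite enum_rankK_in //; apply: proj_vset_base.
  have : v \in P (enum_val k) :&: M by rewrite inE vk.
  by rewrite setIM ?enum_valP // inE => /eqP ev; apply: enum_val_inj; rewrite enum_rankK_in.
- by move=> j; rewrite [_ :&: M]setIM ?enum_valP // cards1.
Qed.
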